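(* Let $\lambda\in\mathbb{C}^*$, $\alpha\in\mathbb{C}$, $t\in\{1,-1\}$. Let $W=\mathbb{C}[x]\mathbf{1}_{\bar0}\oplus\mathbb{C}[y]\mathbf{1}_{\bar1}$ be the $\mathbb{Z}_2$-graded space with $W_{\bar0}=\mathbb{C}[x]\mathbf{1}_{\bar0}$, $W_{\bar1}=\mathbb{C}[y]\mathbf{1}_{\bar1}$ (writing $f(x)$ for $f(x)\mathbf{1}_{\bar0}$ and $g(y)$ for $g(y)\mathbf{1}_{\bar1}$). For $m\in\mathbb{Z}$, $r\in\frac12+\mathbb{Z}$, $p\in\frac12\mathbb{Z}$, $f\in\mathbb{C}[x]$, $g\in\mathbb{C}[y]$ define $$L_mf(x)=\lambda^m(x+m\alpha)f(x+m),\quad L_mg(y)=\lambda^m\big(y+m(\alpha+\tfrac12)\big)g(y+m),$$ $$I_rf(x)=-2t^{2r}\lambda^r\alpha f(x+r),\quad I_rg(y)=t^{2r}\lambda^r(1-2\alpha)g(y+r),$$ $$G_pf(x)=t^{2p}\lambda^pf(y+p),\quad G_pg(y)=(-t)^{2p}\lambda^p(x+2p\alpha)g(x+p).$$ Then $W$ is a $\mathcal{T}$-module under this action (denoted $\mathcal{N}_t(\lambda,\alpha)$), and it is free of rank $2$ as a module over $\mathcal{U}(\mathbb{C}L_0)$.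
   Context: The twisted $N=2$ superconformal algebra $\mathcal{T}$ is the Lie superalgebra over $\mathbb{C}$ with basis $\{L_m, I_r, G_p\mid m\in\mathbb{Z}, r\in\frac12+\mathbb{Z}, p\in\frac12\mathbb{Z}\}$, even part spanned by the $L_m,I_r$, odd part spanned by the $G_p$, and with the only nonzero brackets $[L_m,L_n]=(m-n)L_{m+n}$, $[L_m,I_r]=-rI_{m+r}$, $[L_m,G_p]=(\frac m2-p)G_{m+p}$, $[I_r,G_p]=G_{r+p}$, and $[G_p,G_q]=(-1)^{2p}2L_{p+q}$ if $p+q\in\mathbb{Z}$, $[G_p,G_q]=(-1)^{2p+1}(p-q)I_{p+q}$ if $p+q\in\frac12+\mathbb{Z}$. A $\mathcal{T}$-module is a $\mathbb{Z}_2$-graded space with $\mathcal{T}_{\bar i}V_{\bar j}\subseteq V_{\bar i+\bar j}$ and $x(yv)-(-1)^{|x||y|}y(xv)=[x,y]v$. For $p\in\frac12\mathbb{Z}$, $\lambda^p$ means $(\lambda^{1/2})^{2p}$ for a fixed square root $\lambda^{1/2}$. *)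

From HB Require Import structures.
From mathcomp Require Import all_boot all_order all_algebra.
From mathcomp Require Import complex.
From mathcomp Require Import reals.
Set Implicit Arguments. Unset Strict Implicit. Unset Printing Implicit Defensive.
Import Order.TTheory GRing.Theory Num.Theory.
Local Open Scope ring_scope.

(* TL m  = L_m            (m in Z)
   TI n  = I_(n + 1/2)    (n in Z, i.e. r = n + 1/2 ranges over 1/2 + Z)
   TG k  = G_(k/2)        (k in Z, i.e. p = k/2 ranges over 1/2 Z)          *)
Inductive Tbasis := TL of int | TI of int | TG of int.

(* parity: true = odd *)
Definition Tparity (b : Tbasis) : bool := if b is TG _ then true else false.

Section TwistedN2.
Variable C : fieldType.

Definition half : C := 2%:R^-1.

(* [b1, b2] = c * b  encoded as (c, b); zero bracket encoded with c = 0 *)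
Definition Tbracket (b1 b2 : Tbasis) : C * Tbasis :=
  match b1, b2 with
  | TL m, TL n => ((m - n)%:~R, TL (m + n))
  | TL m, TI n => (- (n%:~R + half), TI (m + n))
  | TI n, TL m => (n%:~R + half, TI (m + n))
  | TL m, TG k => ((m - k)%:~R * half, TG (2 * m + k))
  | TG k, TL m => (- ((m - k)%:~R * half), TG (2 * m + k))
  | TI n, TI _ => (0, TL 0)
  | TI n, TG k => (1, TG (2 * n + 1 + k))
  | TG k, TI n => (-1, TG (2 * n + 1 + k))
  | TG k, TG l =>
      if ~~ odd (absz (k + l)) then
        (* p + q = (k+l)/2 integer : (-1)^(2p) 2 L_(p+q) *)
        ((-1 : C) ^ k * 2%:R, TL ((k + l) %/ 2)%Z)
      else
        (* p + q = (k+l-1)/2 + 1/2 : (-1)^(2p+1) (p-q) I_(p+q) *)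
        ((-1 : C) ^ (k + 1) * ((k - l)%:~R * half), TI ((k + l - 1) %/ 2)%Z)
  end.

(* The space W = C[x] 1_0 (+) C[y] 1_1 : first component even, second odd *)
Definition W := ({poly C} * {poly C})%type.

Definition homog (i : bool) (v : W) : Prop := if i then v.1 = 0 else v.2 = 0.

Definition shift (a : C) (f : {poly C}) : {poly C} := f \Po ('X + a%:P).

(* The action of N_t(lambda, alpha), with mu a fixed square root of lambda,
   so that lambda^p := mu^(2p). *)
Definition Nact (mu alpha t : C) (b : Tbasis) (v : W) : W :=
  let f := v.1 in let g := v.2 in
  match b with
  | TL m =>
      (mu ^ (2 * m) *: (('X + (m%:~R * alpha)%:P) * shift m%:~R f),
       mu ^ (2 * m) *: (('X + (m%:~R * (alpha + half))%:P) * shift m%:~R g))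
  | TI n =>
      let r : C := n%:~R + half in
      ((- 2%:R * t ^ (2 * n + 1) * mu ^ (2 * n + 1) * alpha) *: shift r f,
       (t ^ (2 * n + 1) * mu ^ (2 * n + 1) * (1 - 2%:R * alpha)) *: shift r g)
  | TG k =>
      let p : C := k%:~R * half in
      (((- t) ^ k * mu ^ k) *: (('X + (k%:~R * alpha)%:P) * shift p g),
       (t ^ k * mu ^ k) *: shift p f)
  end.

Definition is_Tmodule (act : Tbasis -> W -> W) : Prop :=
  [/\ (forall b (a : C) (u v : W), act b (a *: u + v) = a *: act b u + act b v),
      (forall b (i : bool) (v : W), homog i v -> homog (Tparity b (+) i) (act b v)) &
      (forall x y (v : W),
         act x (act y v)
         - (if Tparity x && Tparity y then -1 else 1) *: act y (act x v)
         = (Tbracket x y).1 *: act (Tbracket x y).2 v)].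

(* action of a polynomial in L_0, i.e. of an element of U(C L_0) = C[L_0] *)
Definition L0_poly_act (act : Tbasis -> W -> W) (p : {poly C}) (v : W) : W :=
  \sum_(i < size p) p`_i *: iter i (act (TL 0)) v.

Definition free_rank2_over_L0 (act : Tbasis -> W -> W) : Prop :=
  exists w1 w2 : W,
    bijective (fun pq : {poly C} * {poly C} =>
                 L0_poly_act act pq.1 w1 + L0_poly_act act pq.2 w2).

End TwistedN2.

From Pilot Require Import Defs.
From HB Require Import structures.
From mathcomp Require Import all_boot all_order all_algebra.
From mathcomp Require Import complex.
From mathcomp Require Import reals.
From mathcomp Require Import zify ring.
Import Order.TTheory GRing.Theory Num.Theory.
Local Open Scope ring_scope.

(* Evaluating both components at an
   arbitrary point (over a field of characteristic 0 a polynomial is determined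
   by its values) turns each supercommutation relation into a rational identity
   in alpha, the point, powers of mu and the values of f and g at shifted
   points; once mu^(a+b) is split as mu^a mu^b and t^k, (-1)^k are replaced by
   +1 or -1, [field] checks it.  L_0 acts as multiplication by x on both
   components, so C[L_0] acts as C[x] componentwise and (1, 0), (0, 1) is a
   free basis. *)

Lemma eq_poly_horner (C : numFieldType) (p q : {poly C}) :
  (forall x, p.[x] = q.[x]) -> p = q.
Proof.
move=> pq; apply/eqP; rewrite -subr_eq0; apply/negPn/negP => nz_pq.
have roots_pq : all (root (p - q)) [seq i%:R | i <- iota 0 (size (p - q))].
  by apply/allP => _ /mapP [i _ ->]; rewrite /root !hornerE pq subrr.
have uniq_roots : uniq [seq (i%:R : C) | i <- iota 0 (size (p - q))].
  by rewrite map_inj_uniq ?iota_uniq // => i j /eqP; rewrite eqr_nat => /eqP.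
by have := max_poly_roots nz_pq roots_pq uniq_roots; rewrite size_map size_iota ltnn.
Qed.

Lemma horner_shift (C : fieldType) a (p : {poly C}) x : (shift a p).[x] = p.[x + a].
Proof. by rewrite /shift horner_comp !hornerE. Qed.

Lemma W_ext (C : fieldType) (u w : W C) : u.1 = w.1 -> u.2 = w.2 -> u = w.
Proof. by case: u w => ? ? [? ?] /= -> ->. Qed.

Section SignsAndPowers.
Context {C : fieldType}.

Lemma expfz_doubleD {x : C} (a b : int) :
  x != 0 -> x ^ (2 * (a + b)) = x ^ (2 * a) * x ^ (2 * b).
Proof. by move=> x_neq0; rewrite mulrDr expfzDr. Qed.

Lemma N1_neq0 : (-1 : C) != 0.
Proof. by rewrite oppr_eq0 oner_eq0. Qed.

Lemma expN1z_double (a : int) : (-1 : C) ^ (2 * a) = 1.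
Proof. by rewrite -exprz_exp -[(-1) ^ 2]/((-1 : C) ^+ 2) sqrrN expr1n exp1rz. Qed.

Lemma expN1z_cases (k : int) : (-1 : C) ^ k = 1 \/ (-1 : C) ^ k = -1.
Proof.
have [j [->|->]] : exists j : int, k = 2 * j \/ k = 2 * j + 1.
  by exists (k %/ 2)%Z; lia.
- by left; rewrite expN1z_double.
- by right; rewrite (expfzDr _ _ N1_neq0) expN1z_double expr1z mul1r.
Qed.

Lemma expN1z_inv (k : int) : (-1 : C) ^ (- k) = (-1) ^ k.
Proof. by rewrite -invr_expz; case: (expN1z_cases k) => ->; rewrite ?invr1 ?invrN1. Qed.

Lemma expN1z_even_sum {k l j : int} : k + l = 2 * j -> (-1 : C) ^ l = (-1) ^ k.
Proof.
move=> klj; have -> : l = 2 * j + (- k) by lia.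
by rewrite (expfzDr _ _ N1_neq0) expN1z_double mul1r expN1z_inv.
Qed.

Lemma expN1z_odd_sum {k l j : int} : k + l = 2 * j + 1 -> (-1 : C) ^ l = - (-1) ^ k.
Proof.
move=> klj; have -> : l = 2 * j + 1 + (- k) by lia.
rewrite !(expfzDr _ _ N1_neq0) expN1z_double expr1z mul1r expN1z_inv.
by case: (expN1z_cases k) => ->; rewrite ?mulN1r ?opprK.
Qed.

End SignsAndPowers.

Section OddBracket.
Variable C : numFieldType.

Lemma Tbracket_GG_even {k l j : int} : k + l = 2 * j ->
  Tbracket C (TG k) (TG l) = ((-1) ^ k * 2%:R, TL j).
Proof.
move=> klj; rewrite /Tbracket klj (_ : odd _ = false) /=; last by lia.
by congr (_, TL _); lia.
Qed.

Lemma Tbracket_GG_odd {k l j : int} : k + l = 2 * j + 1 ->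
  Tbracket C (TG k) (TG l) = ((-1) ^ (k + 1) * ((k - l)%:~R * Defs.half C), TI j).
Proof.
move=> klj; rewrite /Tbracket klj (_ : odd _ = true) /=; last by lia.
by congr (_, TI _); lia.
Qed.

Lemma intr_half_even {k l j : int} : k + l = 2 * j ->
  (j%:~R : C) = (k%:~R + l%:~R) * Defs.half C.
Proof.
by move=> klj; rewrite -intrD klj intrM /Defs.half; field.
Qed.

Lemma intr_half_odd {k l j : int} : k + l = 2 * j + 1 ->
  (j%:~R : C) = (k%:~R + l%:~R - 1) * Defs.half C.
Proof.
by move=> klj; rewrite -intrD klj intrD intrM /Defs.half; field.
Qed.

End OddBracket.

Ltac eval_components :=
  apply: W_ext => /=; apply: eq_poly_horner => ?;
  rewrite ?(hornerD, hornerN, hornerM, hornerZ, hornerX, hornerC, horner_shift).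

(* After evaluation the same polynomial h may be evaluated at syntactically
   different but equal points; rewrite them to one representative, so that
   [field] treats h.[e] as a single atom. *)
Ltac merge_points_of h e :=
  repeat match goal with |- context [h.[?e']] =>
    tryif constr_eq e e' then fail else
    (rewrite (_ : h.[e'] = h.[e]); last by congr (h.[_]); rewrite /Defs.half; field)
  end.

Ltac merge_equal_points :=
  repeat match goal with |- context [?h.[?e]] => progress merge_points_of h e end.

Ltac split_powers_field mu_neq0 :=
  rewrite ?opprK ?exp1rz ?(expfzDr _ _ mu_neq0, expfz_doubleD _ _ mu_neq0)
          ?(expfzDr _ _ N1_neq0) ?expN1z_double ?expr1z ?exp1rz;
  rewrite /Defs.half; by field.

Section TwistedModule.
Variables (C : numFieldType) (mu alpha t : C).
Hypotheses (mu_neq0 : mu != 0) (t_sign : t = 1 \/ t = -1).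

Local Notation act := (Nact mu alpha t).

Lemma Nact_linear b (a : C) (u w : W C) : act b (a *: u + w) = a *: act b u + act b w.
Proof. by case: b => z; eval_components; merge_equal_points; rewrite /Defs.half; field. Qed.

Lemma Nact_homog b (i : bool) (w : W C) : homog i w -> homog (Tparity b (+) i) (act b w).
Proof. by case: b => z; case: i => /= ->; rewrite /shift ?comp_poly0 ?mulr0 ?scaler0. Qed.

Lemma Nact_supercomm_GG (k l : int) (v : W C) :
  act (TG k) (act (TG l) v) + act (TG l) (act (TG k) v)
  = (Tbracket C (TG k) (TG l)).1 *: act (Tbracket C (TG k) (TG l)).2 v.
Proof.
have [j [klj|klj]] : exists j : int, k + l = 2 * j \/ k + l = 2 * j + 1.
  by exists ((k + l) %/ 2)%Z; lia.
- rewrite (Tbracket_GG_even _ klj) /=.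
  case: t_sign => ->; eval_components; rewrite -klj (intr_half_even _ klj);
    merge_equal_points; rewrite ?(expfzDr _ _ N1_neq0) ?(expN1z_even_sum klj);
    case: (expN1z_cases (C := C) k) => ->; split_powers_field mu_neq0.
- rewrite (Tbracket_GG_odd _ klj) /=.
  case: t_sign => ->; eval_components; rewrite -klj (intr_half_odd _ klj);
    merge_equal_points; rewrite ?(expfzDr _ _ N1_neq0) ?(expN1z_odd_sum klj);
    case: (expN1z_cases (C := C) k) => ->; split_powers_field mu_neq0.
Qed.

Lemma Nact_supercomm x y (v : W C) :
  act x (act y v) - (if Tparity x && Tparity y then -1 else 1) *: act y (act x v)
  = (Tbracket C x y).1 *: act (Tbracket C x y).2 v.
Proof.
case: x => [m|n|k]; case: y => [m'|n'|l];
  last by rewrite [Tparity _ && _]/= scaleN1r opprK Nact_supercomm_GG.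
all: by case: t_sign => ->; eval_components; merge_equal_points; split_powers_field mu_neq0.
Qed.

Lemma Nact_L0 (w : W C) : act (TL 0) w = ('X * w.1, 'X * w.2).
Proof. by eval_components; merge_equal_points; rewrite /Defs.half; field. Qed.

Lemma L0_poly_actE (p : {poly C}) (w : W C) : L0_poly_act act p w = (p * w.1, p * w.2).
Proof.
have iter_L0 i : iter i (act (TL 0)) w = ('X ^+ i * w.1, 'X ^+ i * w.2).
  elim: i => [|i IH]; first by rewrite /= !mul1r; case: w.
  by rewrite iterS IH Nact_L0 /= !exprS !mulrA.
rewrite /L0_poly_act; under eq_bigr do rewrite iter_L0.
rewrite -[in RHS](coefK p) poly_def !mulr_suml.
apply: W_ext; rewrite (big_morph _ (id1 := 0) (op1 := +%R)) //=;
  by apply: eq_bigr => i _; rewrite scalerAl.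
Qed.

Lemma Nact_free_rank2 : free_rank2_over_L0 act.
Proof.
exists (1, 0), (0, 1), (fun w : W C => (w.1, w.2)) => [[p q]|[p q]];
  by rewrite !L0_poly_actE; apply: W_ext; rewrite /= ?mulr1 ?mulr0 ?addr0 ?add0r.
Qed.

End TwistedModule.

Theorem proposition2p8 (R : realType) (lambda mu alpha t : R[i])
    (hlambda : lambda != 0) (hmu : mu ^+ 2 = lambda)
    (ht : t = 1 \/ t = -1) :
  is_Tmodule (Nact mu alpha t) /\ free_rank2_over_L0 (Nact mu alpha t).
Proof.
have mu_neq0 : mu != 0.
  by apply: contraNneq hlambda => mu0; rewrite -hmu mu0 expr0n.
split; last exact: Nact_free_rank2.
split; [exact: Nact_linear | exact: Nact_homog | exact: Nact_supercomm].
Qed.
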